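(* The advised language family $\mathrm{1QFA}/n$ does not satisfy the partial order condition; specifically, the language $L_a=\{wa\mid w\in\{a,b\}^*\}$ over $\Sigma=\{a,b\}$, which violates the partial order condition, belongs to $\mathrm{1QFA}/n$.
   Context: A 1qfa is a one-way measure-many quantum finite automaton (input between endmarkers $\cent$ and $\$$, one unitary per scanned symbol followed by a projection measurement onto accepting/rejecting/non-halting subspaces at every step). For equal-length strings $x\in\Sigma^n,y\in\Gamma^n$, $\genfrac{[}{]}{0pt}{}{x}{y}$ is the two-track string with $x$ on the upper track and $y$ on the lower track. $\mathrm{1QFA}/n$ is the family of languages $L$ for which there exist a 1qfa $M$, $\varepsilon\in[0,1/2)$, an advice alphabet $\Gamma$ and an advice function $h:\mathbb{N}\to\Gamma^*$ with $|h(n)|=n$ such that $M$ on input $\genfrac{[}{]}{0pt}{}{x}{h(|x|)}$ outputs $L(x)$ (1 if $x\in L$, 0 otherwise) with probability at least $1-\varepsilon$ for every $x$. A language satisfies the partial order condition (Brodsky–Pippenger) exactly when its minimal deterministic finite automaton (with transition function extended to strings $\hat\delta$) contains no two inner states $q_1,q_2$ such that (i) there is a string $z$ with $\hat\delta(q_1,z)$ accepting and $\hat\delta(q_2,z)$ not accepting or vice versa, and (ii) there are nonempty strings $x,y$ with $\hat\delta(q_1,x)=\hat\delta(q_2,x)=q_2$ and $\hat\delta(q_2,y)=q_1$. Every language recognized by a bounded-error 1qfa without advice satisfies this condition. *)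

From HB Require Import structures.
From mathcomp Require Import all_boot all_order all_algebra.
From mathcomp Require Import complex.
From mathcomp Require Import Rstruct.
Set Implicit Arguments. Unset Strict Implicit. Unset Printing Implicit Defensive.
Import Order.TTheory GRing.Theory Num.Theory.
Local Open Scope ring_scope.

Definition RR := Rdefinitions.R.
Definition CC := RR[i].

Definition sqmod (z : CC) : RR := (complex.Re z) ^+ 2 + (complex.Im z) ^+ 2.

Record dfa (S : Type) := DFA {
  dstate : finType;
  dstart : dstate;
  ddelta : dstate -> S -> dstate;
  dfinal : pred dstate }.

Definition dhat (S : Type) (D : dfa S) (q : dstate D) (w : seq S) : dstate D :=
  foldl (@ddelta S D) q w.

Definition minimal_dfa_of (S : Type) (D : dfa S) (L : seq S -> Prop) : Prop :=
  [/\ (forall w, L w <-> @dfinal S D (dhat (dstart D) w)),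
      (forall q : dstate D, exists w, dhat (dstart D) w = q) &
      (forall q1 q2 : dstate D, q1 <> q2 ->
         exists z, @dfinal S D (dhat q1 z) != @dfinal S D (dhat q2 z))].

Definition poc_pattern (S : Type) (D : dfa S) (q1 q2 : dstate D) : Prop :=
  (exists z, @dfinal S D (dhat q1 z) != @dfinal S D (dhat q2 z)) /\
  (exists x y : seq S, x <> [::] /\ y <> [::] /\
     dhat q1 x = q2 /\ dhat q2 x = q2 /\ dhat q2 y = q1).

Definition partial_order_condition (S : Type) (L : seq S -> Prop) : Prop :=
  forall D : dfa S, minimal_dfa_of D L ->
    ~ exists q1 q2 : dstate D, poc_pattern q1 q2.

Inductive tsym (T : Type) := Cent | Dollar | Sym of T.
Arguments Cent {T}. Arguments Dollar {T}.

Definition unitary (N : nat) (U : 'M[CC]_N) : Prop :=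
  U *m (map_mx (@conjc _) U)^T = 1%:M.

(* A 1qfa over tape alphabet T: an orthonormal basis indexed by 'I_qdim,
   one matrix per tape symbol, an initial basis state, and the accepting and
   rejecting basis states (the others are non-halting). *)
Record qfa (T : Type) := QFA {
  qdim : nat;
  qU : tsym T -> 'M[CC]_qdim;
  qstart : 'I_qdim;
  qacc : {set 'I_qdim};
  qrej : {set 'I_qdim} }.

Definition qnon (T : Type) (M : qfa T) : {set 'I_(qdim M)} :=
  ~: (qacc M :|: qrej M).

Definition wf_qfa (T : Type) (M : qfa T) : Prop :=
  [/\ forall s, unitary (qU M s),
      [disjoint qacc M & qrej M] &
      qstart M \in qnon M].

Definition proj (N : nat) (A : {set 'I_N}) (psi : 'cV[CC]_N) : 'cV[CC]_N :=
  \col_i (if i \in A then psi i ord0 else 0).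

Definition prob (N : nat) (A : {set 'I_N}) (psi : 'cV[CC]_N) : RR :=
  \sum_(i in A) sqmod (psi i ord0).

(* Run the 1qfa on a tape starting from the (unnormalized) state psi:
   at each step apply the unitary of the scanned symbol, then measure;
   returns (acceptance probability, rejection probability). *)
Fixpoint qrun (T : Type) (M : qfa T) (w : seq (tsym T)) (psi : 'cV[CC]_(qdim M)) {struct w}
  : RR * RR :=
  match w with
  | [::] => (0, 0)
  | s :: w' =>
      let phi := qU M s *m psi in
      let r := @qrun T M w' (proj (qnon M) phi) in
      (prob (qacc M) phi + r.1, prob (qrej M) phi + r.2)
  end.

Definition ket (N : nat) (q : 'I_N) : 'cV[CC]_N := \col_i (if i == q then 1 else 0).

Definition tape (T : Type) (w : seq T) : seq (tsym T) :=
  Cent :: rcons (map (@Sym T) w) Dollar.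

Definition acc_prob (T : Type) (M : qfa T) (w : seq T) : RR :=
  (@qrun T M (tape w) (ket (qstart M))).1.
Definition rej_prob (T : Type) (M : qfa T) (w : seq T) : RR :=
  (@qrun T M (tape w) (ket (qstart M))).2.

Definition two_track (S G : Type) (x : seq S) (y : seq G) : seq (S * G) := zip x y.

Definition in_1QFA_n (S : Type) (L : seq S -> Prop) : Prop :=
  exists (G : finType) (M : qfa (S * G)) (eps : RR) (h : nat -> seq G),
    [/\ wf_qfa M, 0 <= eps < 1/2, (forall n, size (h n) = n) &
        forall x : seq S,
          (L x -> 1 - eps <= acc_prob M (two_track x (h (size x)))) /\
          (~ L x -> 1 - eps <= rej_prob M (two_track x (h (size x))))].

Inductive ab := sa | sb.

Definition L_a (x : seq ab) : Prop := exists w, x = rcons w sa.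

(* L_a is recognised by a two-state DFA remembering whether the last letter
   read was [a]; its states [false] and [true] form the forbidden pattern of
   the partial order condition ([a] leads both to [true], [b] leads back to
   [false]).  With advice, however, the automaton knows where the input ends:
   the advice string [0 ... 0 1] marks the last position, so a 1qfa that
   idles on advice [0] and on advice [1] halts in an accepting or rejecting
   basis state according to the scanned letter decides L_a with certainty.
   This automaton is classical and reversible: its unitaries are permutation
   matrices, so a basis state is mapped to a basis state at every step. *)
From Pilot Require Import Defs.
From mathcomp Require Import all_boot all_order all_algebra all_fingroup.
From mathcomp Require Import complex Rstruct.
Set Implicit Arguments. Unset Strict Implicit. Unset Printing Implicit Defensive.
Import Order.TTheory GRing.Theory Num.Theory.
Local Open Scope ring_scope.

Definition is_a (c : ab) : bool := if c is sa then true else false.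

Lemma L_aE (x : seq ab) : L_a x <-> is_a (last sb x).
Proof.
case/lastP: x => [|x c]; first by split=> // -[[|? ?]].
rewrite last_rcons; split; first by case=> w /(congr1 (last sb)); rewrite !last_rcons => ->.
by case: c => // _; exists x.
Qed.

Definition last_a_dfa : dfa ab := @DFA ab bool false (fun _ c => is_a c) id.

Lemma dhat_last_a (q : bool) (w : seq ab) :
  dhat (D := last_a_dfa) q w = last q (map is_a w).
Proof. by elim: w q => //= c w IH q; rewrite /dhat /= -/(dhat _ _) IH. Qed.

Lemma minimal_last_a_dfa : minimal_dfa_of last_a_dfa L_a.
Proof.
split.
- by move=> w; rewrite L_aE dhat_last_a -(last_map is_a w sb).
- by case; [exists [:: sa] | exists [::]].
- by move=> [] [] // _; exists [::].
Qed.

Lemma last_a_poc_pattern : poc_pattern (D := last_a_dfa) false true.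
Proof. by split; [exists [::] | exists [:: sa], [:: sb]]. Qed.

Lemma sqmod0 : sqmod 0 = 0.
Proof. by rewrite /sqmod /= expr0n addr0. Qed.

Lemma sqmod1 : sqmod 1 = 1.
Proof. by rewrite /sqmod /= expr1n expr0n addr0. Qed.

Section BasisStates.
Variable N : nat.

Lemma prob0 (A : {set 'I_N}) : prob A 0 = 0.
Proof. by rewrite /prob big1 // => i _; rewrite mxE sqmod0. Qed.

Lemma proj0 (A : {set 'I_N}) : proj A 0 = 0.
Proof. by apply/matrixP => i j; rewrite !mxE; case: ifP. Qed.

Lemma prob_ket (A : {set 'I_N}) (q : 'I_N) : prob A (ket q) = (q \in A)%:R.
Proof.
rewrite /prob; have [qA|qA] := boolP (q \in A).
  rewrite (bigD1 q qA) /= big1 => [|i /andP[_ /negbTE iq]]; last by rewrite mxE iq sqmod0.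
  by rewrite mxE eqxx sqmod1 addr0.
rewrite big1 // => i iA; rewrite mxE; case: eqP => [iq|_]; last exact: sqmod0.
by rewrite iq (negbTE qA) in iA.
Qed.

Lemma proj_ket (A : {set 'I_N}) (q : 'I_N) :
  proj A (ket q) = if q \in A then ket q else 0.
Proof.
by case: ifP => qA; apply/matrixP => i j; rewrite !mxE //;
  case: eqP => [->|_]; rewrite ?qA //; case: ifP.
Qed.

Lemma perm_mx_ket (s : 'S_N) (q : 'I_N) :
  (perm_mx s : 'M[CC]_N) *m ket q = ket (s^-1%g q).
Proof.
rewrite -row_permE; apply/matrixP => i j; rewrite !mxE.
by rewrite -(inj_eq (@perm_inj _ s^-1%g)) permK.
Qed.

Lemma unitary_perm_mx (s : 'S_N) : unitary (perm_mx s : 'M[CC]_N).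
Proof.
rewrite /unitary; have -> : map_mx (@conjc _) (perm_mx s : 'M[CC]_N) = perm_mx s.
  by apply/matrixP => i j; rewrite !mxE conjc_nat.
by rewrite tr_perm_mx -perm_mxM mulgV perm_mx1.
Qed.

End BasisStates.

Section BasisRun.
Variables (T : Type) (M : qfa T).

Lemma qrun0 (w : seq (tsym T)) : qrun (M := M) w 0 = (0, 0).
Proof. by elim: w => //= s w IH; rewrite mulmx0 proj0 IH !prob0 !addr0. Qed.

Lemma qrun_cons_ket (s : tsym T) (w : seq (tsym T)) (q q' : 'I_(qdim M)) :
  qU M s *m ket q = ket q' ->
  qrun (M := M) (s :: w) (ket q) =
    if q' \in qnon M then qrun (M := M) w (ket q') else ((q' \in qacc M)%:R, (q' \in qrej M)%:R).
Proof.
move=> /= ->; rewrite proj_ket !prob_ket; case: ifP => q'non.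
  move: q'non; rewrite inE in_setU negb_or => /andP[/negbTE -> /negbTE ->].
  by rewrite !add0r; case: (qrun _ _).
by rewrite qrun0 !addr0.
Qed.

Lemma qrun_cat_fixed (P : pred (tsym T)) (q : 'I_(qdim M)) (l r : seq (tsym T)) :
  (forall s, P s -> qU M s *m ket q = ket q) -> q \in qnon M -> all P l ->
  qrun (M := M) (l ++ r) (ket q) = qrun (M := M) r (ket q).
Proof.
move=> fixq qnon; elim: l => // s l IH /andP[Ps Pl].
by rewrite (qrun_cons_ket _ (fixq s Ps)) qnon IH.
Qed.

End BasisRun.

Lemma tape_rcons (T : Type) (w : seq T) (c : T) :
  tape (rcons w c) = (Cent :: map (@Defs.Sym T) w) ++ [:: Defs.Sym c; Dollar].
Proof. by rewrite /tape map_rcons -!cats1 -catA. Qed.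

Definition q_run : 'I_3 := @Ordinal 3 0 isT.
Definition q_acc : 'I_3 := @Ordinal 3 1 isT.
Definition q_rej : 'I_3 := @Ordinal 3 2 isT.

Definition step_perm (s : tsym (ab * bool)) : 'S_3 :=
  match s with
  | Defs.Sym (sa, true) => tperm q_run q_acc
  (* only the empty input is still running when [Dollar] is scanned *)
  | Defs.Sym (sb, true) | Dollar => tperm q_run q_rej
  | _ => 1%g
  end.

Definition last_a_qfa : qfa (ab * bool) :=
  @QFA _ 3 (fun s => perm_mx (step_perm s)) q_run [set q_acc] [set q_rej].

Definition last_marker (n : nat) : seq bool :=
  if n is n'.+1 then rcons (nseq n' false) true else [::].

Lemma qnon_last_a_qfa : qnon last_a_qfa = [set q_run].
Proof. by apply/setP => i; rewrite !inE; case: i => [[|[|[|]]]]. Qed.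

Lemma wf_last_a_qfa : wf_qfa last_a_qfa.
Proof.
split=> [s|| ]; first exact: unitary_perm_mx.
  by rewrite disjoints1 inE.
by rewrite qnon_last_a_qfa inE.
Qed.

Lemma last_a_qfa_step (s : tsym (ab * bool)) :
  qU last_a_qfa s *m ket q_run = ket ((step_perm s)^-1%g q_run).
Proof. exact: perm_mx_ket. Qed.

Lemma qrun_last_a_qfa (x : seq ab) :
  qrun (M := last_a_qfa) (tape (two_track x (last_marker (size x)))) (ket q_run)
    = ((is_a (last sb x))%:R, (~~ is_a (last sb x))%:R).
Proof.
have idle s : step_perm s == 1%g -> qU last_a_qfa s *m ket q_run = ket q_run.
  by move=> /eqP s1; rewrite last_a_qfa_step s1 invg1 perm1.
have run_non : q_run \in qnon last_a_qfa by rewrite qnon_last_a_qfa inE.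
case/lastP: x => [|x c].
  rewrite (qrun_cons_ket _ (idle Cent (eqxx _))) run_non.
  by rewrite (qrun_cons_ket _ (last_a_qfa_step _)) /= tpermV tpermL qnon_last_a_qfa !inE.
rewrite size_rcons /two_track zip_rcons ?size_nseq // tape_rcons.
rewrite (qrun_cat_fixed _ idle run_non); last first.
  by rewrite /= eqxx; elim: (x) => //= c' x' ->; case: c'; rewrite eqxx.
rewrite (qrun_cons_ket _ (last_a_qfa_step _)) last_rcons.
by case: c; rewrite /= tpermV tpermL qnon_last_a_qfa !inE.
Qed.

Theorem lemma3p3 :
  ~ partial_order_condition L_a /\ in_1QFA_n L_a.
Proof.
split.
  by move=> poc; apply: (poc _ minimal_last_a_dfa); exists false, true; exact: last_a_poc_pattern.
exists bool, last_a_qfa, 0, last_marker; split.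
- exact: wf_last_a_qfa.
- by rewrite lexx /= divr_gt0 // ltr0n.
- by case=> //= n; rewrite size_rcons size_nseq.
move=> x; rewrite /acc_prob /rej_prob qrun_last_a_qfa L_aE subr0 /=.
case: (is_a (last sb x)); split.
- by move=> _; exact: lexx.
- by move=> /(_ isT).
- by [].
- by move=> _; exact: lexx.
Qed.
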